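(* Let $R=(r_{ij})$ be a real symmetric $n\times n$ matrix with zero diagonal and $\rho(|R|)<1$, with belief-propagation estimate $Z^{\mathrm{bp}}$ and backtrackless adjacency matrix $R'$ (defined in the context). Then $$\det(I-R)^{-1}=Z^{\mathrm{bp}}\times\det(I-R')^{-1}.$$
   Context: $|R|=(|r_{ij}|)$, $\rho$ the spectral radius. $G$ is the graph on $V=\{1,\dots,n\}$ with undirected edge $\{i,j\}$ whenever $r_{ij}\neq0$; $\partial i$ is the neighbour set of $i$; each undirected edge gives directed edges $(ij),(ji)$. GaBP messages: $\alpha_{ij}=\lim_t\alpha^{(t)}_{ij}$ with $\alpha^{(0)}_{ij}=0$, $\alpha^{(t+1)}_{ij}=r_{ij}^2(1-\sum_{k\in\partial i\setminus j}\alpha^{(t)}_{ki})^{-1}$ (convergent when $\rho(|R|)<1$, with $1-\alpha_{i\setminus j}>0$); $\alpha_{i\setminus j}=\sum_{k\in\partial i\setminus j}\alpha_{ki}$. $Z_i^{\mathrm{bp}}=(1-\sum_{k\in\partial i}\alpha_{ki})^{-1}$, $Z_{ij}^{\mathrm{bp}}=\det\begin{pmatrix}1-\alpha_{i\setminus j} & -r_{ij}\\ -r_{ij} & 1-\alpha_{j\setminus i}\end{pmatrix}^{-1}$, $Z^{\mathrm{bp}}=\prod_{i\in V}Z_i^{\mathrm{bp}}\prod_{\{i,j\}\in G}\frac{Z_{ij}^{\mathrm{bp}}}{Z_i^{\mathrm{bp}}Z_j^{\mathrm{bp}}}$. Let $r'_{ij}=\frac{r_{ij}}{1-\alpha_{i\setminus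 j}}$. The matrix $R'$ has rows and columns indexed by directed edges of $G$, with $R'_{(ij),(kl)}=r'_{kl}$ if $j=k$ and $i\neq l$, and $0$ otherwise. *)

From HB Require Import structures.
From mathcomp Require Import all_boot all_order all_algebra.
From mathcomp Require Import complex.
From mathcomp Require Import all_classical all_reals topology normedtype sequences.
Set Implicit Arguments. Unset Strict Implicit. Unset Printing Implicit Defensive.
Import Order.TTheory GRing.Theory Num.Theory numFieldNormedType.Exports.
Local Open Scope ring_scope.

Section GaBP.
Variables (R : realType) (n : nat).

Definition eigenvalueC (A : 'M[R]_n) (z : R[i]) : Prop :=
  root (char_poly (map_mx (fun x : R => (x%:C)%C) A)) z.

Definition modC (z : R[i]) : R :=
  Num.sqrt (complex.Re z ^+ 2 + complex.Im z ^+ 2).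

(* spectral radius: largest modulus of a (complex) eigenvalue (0 if n = 0) *)
Definition spectral_radius (A : 'M[R]_n) : R :=
  sup [set x : R | exists z : R[i], eigenvalueC A z /\ x = modC z].

Definition absmx (A : 'M[R]_n) : 'M[R]_n := map_mx (fun x => `|x|) A.

Definition nbr (r : 'M[R]_n) (i k : 'I_n) : bool := r i k != 0.

Fixpoint bp_msg (r : 'M[R]_n) (t : nat) : 'I_n -> 'I_n -> R :=
  match t with
  | 0 => fun _ _ => 0
  | t'.+1 => fun i j =>
      r i j ^+ 2 / (1 - \sum_(k | nbr r i k && (k != j)) bp_msg r t' k i)
  end.

Definition bp_alpha (r : 'M[R]_n) (i j : 'I_n) : R :=
  limn (fun t => bp_msg r t i j).

Definition bp_alpha_excl (r : 'M[R]_n) (i j : 'I_n) : R :=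
  \sum_(k | nbr r i k && (k != j)) bp_alpha r k i.

Definition Zbp_node (r : 'M[R]_n) (i : 'I_n) : R :=
  (1 - \sum_(k | nbr r i k) bp_alpha r k i)^-1.

Definition Zbp_edge (r : 'M[R]_n) (i j : 'I_n) : R :=
  (\det (\matrix_(a < 2, b < 2)
      (if (val a == 0%N) && (val b == 0%N) then 1 - bp_alpha_excl r i j
       else if (val a == 1%N) && (val b == 1%N) then 1 - bp_alpha_excl r j i
       else - r i j)))^-1.

(* undirected edges {i,j} of G are enumerated once as pairs i < j *)
Definition Zbp (r : 'M[R]_n) : R :=
  (\prod_i Zbp_node r i) *
  \prod_(p : 'I_n * 'I_n | (p.1 < p.2)%N && nbr r p.1 p.2)
     (Zbp_edge r p.1 p.2 / (Zbp_node r p.1 * Zbp_node r p.2)).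

Definition dedges (r : 'M[R]_n) : {set 'I_n * 'I_n} :=
  [set p | nbr r p.1 p.2].

Definition rprime (r : 'M[R]_n) (k l : 'I_n) : R :=
  r k l / (1 - bp_alpha_excl r k l).

(* backtrackless matrix R', rows/columns indexed by directed edges
   (enumerated through enum_val) *)
Definition Rprime (r : 'M[R]_n) : 'M[R]_#|dedges r| :=
  \matrix_(a, b)
    (let e := enum_val a in let f := enum_val b in
     if (e.2 == f.1) && (e.1 != f.2) then rprime r f.1 f.2 else 0).

End GaBP.

From HB Require Import structures.
From mathcomp Require Import all_boot all_order all_algebra.
From mathcomp Require Import complex.
From mathcomp Require Import all_classical all_reals topology normedtype sequences.
From mathcomp Require Import fingroup perm polyrcf.
From mathcomp Require Import ring lra.
Import Order.TTheory GRing.Theory Num.Theory numFieldNormedType.Exports.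
Local Open Scope classical_set_scope.
Local Open Scope ring_scope.
Set Implicit Arguments. Unset Strict Implicit. Unset Printing Implicit Defensive.

(* Write B = |R|. Since rho(B) < 1, det(I - tB) does not vanish for t in
   [0, 1], and following the polynomials adj(I - tB) 1 from t = 0 to t = 1
   shows that v = (I - B)^-1 1 is a positive vector. Then
   0 <= alpha_kl <= |r_kl| v_k / v_l is preserved by the GaBP update, so the
   messages increase to a fixed point whose cavity denominators
   1 - alpha_{i\j} and 1 - sum_k alpha_ki are positive.
   At the fixed point, I - R' = P - T S, where T and S attach a directed edge
   to its endpoints and P only couples an edge with its reversal. P is
   inverted explicitly, the Schur complement I - S P^-1 T equals
   diag(Z_i^bp) (I - R), and det P factors over undirected edges {i,j} into
   1 - r'_ij r'_ji = Z_ij^bp / (Z_i^bp Z_j^bp). *)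

Lemma sumr_delta (T : pzSemiRingType) (I : finType) (a : I) (F : I -> T) :
  \sum_j (a == j)%:R * F j = F a.
Proof.
rewrite (bigD1 a) //= eqxx mul1r big1 ?addr0 // => j ja.
by rewrite eq_sym (negbTE ja) mul0r.
Qed.

Lemma det_mx22 (T : comPzRingType) (M : 'M[T]_2) :
  \det M = M 0 0 * M 1 1 - M 0 1 * M 1 0.
Proof.
rewrite (expand_det_row _ 0) !big_ord_recl big_ord0 addr0 /cofactor.
rewrite !det_mx11 !mxE /=.
have -> : lift 0 0 = 1 :> 'I_2 by apply: val_inj.
have -> : lift 1 0 = 0 :> 'I_2 by apply: val_inj.
have -> : ord0 = 0 :> 'I_2 by apply: val_inj.
by rewrite /bump /= expr0 expr1 mul1r mulN1r mulrN.
Qed.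

Lemma det_schur_complement (T : comPzRingType) k l (P : 'M[T]_k)
    (B : 'M[T]_(k, l)) (C : 'M[T]_(l, k)) (W : 'M[T]_k) :
  P *m W = 1%:M -> \det (P - B *m C) = \det P * \det (1%:M - C *m W *m B).
Proof.
move=> PW.
have eL : block_mx P B C 1%:M =
    block_mx 1%:M B 0 1%:M *m block_mx (P - B *m C) 0 C 1%:M.
  by rewrite mulmx_block !mul1mx !mulmx0 !mul0mx !mulmx1 !add0r subrK.
have eR : block_mx P B C 1%:M =
    block_mx P 0 C (1%:M - C *m W *m B) *m block_mx 1%:M (W *m B) 0 1%:M.
  rewrite mulmx_block !mulmx1 !mul0mx !mulmx0 !addr0 mulmxA PW mul1mx.
  by rewrite mulmxA addrC subrK.
have := congr1 determinant eR; rewrite {1}eL !det_mulmx det_ublock det_lblock.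
by rewrite det_lblock det_ublock !det1 !mul1r !mulr1.
Qed.

Lemma det_block_trig (T : comPzRingType) k (M : 'M[T]_k) (q : pred 'I_k) :
  (forall e f, e != f -> q e ==> q f -> M e f = 0) ->
  \det M = \prod_e M e e.
Proof.
move=> Mq; rewrite /determinant (bigD1 (1%g : 'S_k)) //= [X in _ + X]big1.
  rewrite odd_perm1 expr0 mul1r addr0.
  by apply: eq_bigr => i _; rewrite perm1.
move=> s s1.
have [j sj] : exists j, s j != j.
  apply/existsP; apply: contraR s1 => /existsPn fix_s; apply/eqP/permP => x.
  by rewrite perm1; apply/eqP; move: (fix_s x); rewrite negbK.
have vanish x : x != s x -> q x ==> q (s x) -> (-1) ^+ s * \prod_i M i (s i) = 0.
  by move=> sx qx; rewrite (bigD1 x) //= Mq // mul0r mulr0.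
have [qj|] := boolP (q j ==> q (s j)); first by apply: (vanish j); rewrite // eq_sym.
rewrite negb_imply => /andP[_ qsj].
apply: (vanish (s j)); last by rewrite (negbTE qsj).
by apply: contra sj => /eqP/perm_inj <-.
Qed.

Section RealRoots.
Variable R : rcfType.
Implicit Types (p : {poly R}) (a b : R).

Lemma poly_ge0_noroot p a b : a <= b -> 0 < p.[a] ->
  {in `[a, b[, forall x, ~~ root p x} -> 0 <= p.[b].
Proof.
move=> ab pa noroot_p; rewrite leNgt; apply/negP => pb.
have [x xab px] : {x | x \in `]a, b[ & root p x}.
  by apply: poly_ivtoo => //; rewrite pmulr_rlt0.
have /noroot_p : x \in `[a, b[ by move: xab; rewrite !in_itv /= => /andP[/ltW -> ->].
by rewrite px.
Qed.

Lemma poly_gt0_noroot p a b : a <= b -> 0 < p.[a] ->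
  {in `[a, b], forall x, ~~ root p x} -> 0 < p.[b].
Proof.
move=> ab pa noroot_p; rewrite lt_neqAle eq_sym.
have /rootPf -> /= : ~~ root p b by apply: noroot_p; rewrite in_itv /= ab lexx.
apply: poly_ge0_noroot pa _ => // x; rewrite in_itv /= => /andP[ax xb].
by apply: noroot_p; rewrite in_itv /= ax ltW.
Qed.

Lemma first_root p a b : p != 0 -> a < b -> root p b ->
  exists2 m, a < m <= b & root p m /\ {in `]a, m[, forall x, ~~ root p x}.
Proof.
move=> p0 ab pb; case: (next_rootP p a b) => [/eqP|m _ /rootP pm mab noroot_m|c _ _ nob].
- by rewrite (negbTE p0).
- by exists m; [rewrite (itvP mab) ltW ?(itvP mab) | split].
- by exists b; [rewrite ab lexx | split].
Qed.

End RealRoots.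

Section DirectedEdges.
Variables (R : realType) (n : nat) (r : 'M[R]_n).
Hypothesis r_sym : forall i j, r i j = r j i.
Hypothesis r_diag0 : forall i, r i i = 0.

Local Notation m := #|dedges r|.

Definition edge (e : 'I_m) : 'I_n * 'I_n := enum_val e.

Lemma edge_nbr e : nbr r (edge e).1 (edge e).2.
Proof. by have := enum_valP e; rewrite inE. Qed.

Lemma edge_inj : injective edge.
Proof. exact: enum_val_inj. Qed.

Lemma nbr_sym i j : nbr r i j = nbr r j i.
Proof. by rewrite /nbr r_sym. Qed.

Lemma nbr_neq i j : nbr r i j -> i != j.
Proof. by apply: contraTneq => ->; rewrite /nbr r_diag0 eqxx. Qed.

Definition flip (e : 'I_m) : 'I_m :=
  enum_rank_in (enum_valP e) ((edge e).2, (edge e).1).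

Lemma edge_flip e : edge (flip e) = ((edge e).2, (edge e).1).
Proof. by rewrite /flip /edge enum_rankK_in // inE -nbr_sym; exact: edge_nbr. Qed.

Lemma flipK : involutive flip.
Proof. by move=> e; apply: edge_inj; rewrite !edge_flip; case: (edge e). Qed.

Lemma flip_neq e : (flip e == e) = false.
Proof.
apply/negbTE; rewrite -(inj_eq edge_inj) edge_flip.
have := nbr_neq (edge_nbr e); case: (edge e) => a b /= ab.
by rewrite xpair_eqE eq_sym andbb.
Qed.

Lemma eq_flip e f :
  (f == flip e) = ((edge f).1 == (edge e).2) && ((edge f).2 == (edge e).1).
Proof. by rewrite -(inj_eq edge_inj) edge_flip; case: (edge f). Qed.

(* Each undirected edge has exactly one increasing orientation. *)
Definition incr (e : 'I_m) := ((edge e).1 < (edge e).2)%N.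

Lemma incr_flip e : incr (flip e) = ~~ incr e.
Proof.
rewrite /incr edge_flip /=; have := nbr_neq (edge_nbr e).
case: (edge e) => x y /= xy; rewrite ltnNge leq_eqVlt negb_or.
by move: xy; rewrite -(inj_eq val_inj) /= => ->.
Qed.

Lemma prod_decr_edges (F : 'I_n -> 'I_n -> R) :
  \prod_(e | ~~ incr e) F (edge e).1 (edge e).2 =
  \prod_(p : 'I_n * 'I_n | (p.1 < p.2)%N && nbr r p.1 p.2) F p.2 p.1.
Proof.
rewrite (_ : \prod_(e | ~~ incr e) _ =
  \prod_(p in dedges r | ~~ (p.1 < p.2)%N) F p.1 p.2); last first.
  by rewrite big_enum_val_cond.
rewrite (reindex_inj (h := fun p : 'I_n * 'I_n => (p.2, p.1))); last first.
  by move=> [x y] [z w] /= [-> ->].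
apply: eq_bigl => [[x y]] /=; rewrite inE /= nbr_sym.
case xy: (nbr r x y); rewrite ?andbF //= andbT -leqNgt leq_eqVlt.
by have := nbr_neq xy; rewrite -(inj_eq val_inj) /= => /negbTE ->.
Qed.

End DirectedEdges.

Section FixedPointAlgebra.
Variables (R : realType) (n : nat) (r : 'M[R]_n).
Hypothesis r_sym : forall i j, r i j = r j i.
Hypothesis r_diag0 : forall i, r i i = 0.
Local Notation a := (bp_alpha r).
Local Notation d i j := (1 - bp_alpha_excl r i j).
Local Notation s i := (\sum_(k | nbr r i k) bp_alpha r k i).
Local Notation rp := (rprime r).
Hypothesis alpha_fixed : forall i j, nbr r i j -> a i j * d i j = r i j ^+ 2.
Hypothesis cavity_neq0 : forall i j, nbr r i j -> d i j != 0.
Hypothesis node_neq0 : forall i, 1 - s i != 0.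

Local Notation m := #|dedges r|.
Local Notation edge := (@edge R n r).
Local Notation flip := (@flip R n r).
Local Notation nbr_sym := (nbr_sym r_sym).
Local Notation edge_flip := (edge_flip r_sym).
Local Notation flipK := (flipK r_sym).
Local Notation flip_neq := (flip_neq r_sym r_diag0).
Local Notation eq_flip := (eq_flip r_sym).
Local Notation incr := (@incr R n r).
Local Notation incr_flip := (incr_flip r_sym r_diag0).

Lemma cavityE i j : nbr r i j -> d i j = 1 - s i + a j i.
Proof.
move=> ij; rewrite (bigD1 j) //= /bp_alpha_excl.
by rewrite (eq_bigl (fun k => nbr r i k && (k != j))); first ring.
Qed.

Lemma one_sub_rprime2 i k : nbr r i k -> 1 - rp i k * rp k i = (1 - s i) / d i k.
Proof.
move=> ik; have ki : nbr r k i by rewrite -nbr_sym.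
have dik := cavityE ik; have aki := alpha_fixed ki.
have nik := cavity_neq0 ik; have nki := cavity_neq0 ki.
rewrite [r k i]r_sym in aki; rewrite /rprime [r k i]r_sym.
move: nik nki dik aki; set D1 := d i k; set D2 := d k i => nik nki dik aki.
apply: (@mulIf _ (D1 * D2)); first by rewrite mulf_neq0.
rewrite mulrBl mul1r.
have -> : r i k / D1 * (r i k / D2) * (D1 * D2) = r i k ^+ 2 by field; rewrite nki nik.
by rewrite -aki dik; field; rewrite -dik.
Qed.

Definition rpe (e : 'I_m) := rp (edge e).1 (edge e).2.

Lemma rpe_flip e : rpe (flip e) = rp (edge e).2 (edge e).1.
Proof. by rewrite /rpe edge_flip. Qed.

(* [I - R' = P - T S]: [T] maps an edge to its head, [S] a node to the
   weighted edges leaving it, and [P] keeps the backtracking terms. *)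
Definition Pmx : 'M[R]_m := \matrix_(e, f) ((e == f)%:R + (f == flip e)%:R * rpe f).
Definition head_mx : 'M[R]_(m, n) := \matrix_(e, j) ((edge e).2 == j)%:R.
Definition tail_mx : 'M[R]_(n, m) := \matrix_(i, f) (((edge f).1 == i)%:R * rpe f).

Lemma one_sub_Rprime : 1%:M - Rprime r = Pmx - head_mx *m tail_mx.
Proof.
apply/matrixP => e f; rewrite !mxE.
under eq_bigr do rewrite !mxE.
rewrite sumr_delta eq_flip -/(edge e) -/(edge f) /rpe.
case: (edge e) (edge f) => [x y] [z w] /=.
have [<-|/eqP yz] := y =P z; rewrite ?eqxx /=.
  have [<-|/eqP xw] := x =P w; rewrite ?eqxx /=; first ring.
  by rewrite [w == x]eq_sym (negbTE xw) /=; ring.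
by rewrite [z == y]eq_sym (negbTE yz) /=; ring.
Qed.

Definition flip_det e := 1 - rpe e * rpe (flip e).

Lemma flip_detC e : flip_det (flip e) = flip_det e.
Proof. by rewrite /flip_det flipK mulrC. Qed.

Lemma flip_detE e : flip_det e = (1 - s (edge e).1) / d (edge e).1 (edge e).2.
Proof. by rewrite /flip_det rpe_flip /rpe one_sub_rprime2 //; exact: edge_nbr. Qed.

Lemma flip_det_neq0 e : flip_det e != 0.
Proof. by rewrite flip_detE mulf_neq0 // invr_eq0 cavity_neq0 //; exact: edge_nbr. Qed.

Definition Pinv : 'M[R]_m :=
  \matrix_(g, f) (((g == f)%:R - (f == flip g)%:R * rpe f) / flip_det g).

Lemma Pmx_Pinv : Pmx *m Pinv = 1%:M.
Proof.
apply/matrixP => e f; rewrite !mxE.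
under eq_bigr do rewrite !mxE mulrDl [_ == flip e]eq_sym -mulrA.
rewrite big_split /= !sumr_delta flipK flip_detC.
have := flip_det_neq0 e; rewrite /flip_det => De.
have ef : (e == flip e) = false by rewrite eq_sym flip_neq.
have [->|/eqP fe] := f =P e; first by rewrite eqxx ef flip_neq /=; field.
have [->|/eqP ff] := f =P flip e; first by rewrite eqxx ef /=; field.
by rewrite [e == f]eq_sym (negbTE fe) [flip e == f]eq_sym (negbTE ff) /=; field.
Qed.

Definition Pmx_lower : 'M[R]_m :=
  \matrix_(e, f) ((e == f)%:R + (~~ incr e)%:R * (f == flip e)%:R * rpe f).
Definition Pmx_upper : 'M[R]_m :=
  \matrix_(e, f) ((e == f)%:R * (1 - (~~ incr e)%:R * (rpe (flip e) * rpe e))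
                  + (incr e)%:R * (f == flip e)%:R * rpe f).

Lemma Pmx_LU : Pmx_lower *m Pmx_upper = Pmx.
Proof.
apply/matrixP => e f; rewrite !mxE.
under eq_bigr do rewrite [Pmx_lower _ _]mxE mulrDl.
rewrite big_split /= sumr_delta.
have -> : \sum_g (~~ incr e)%:R * (g == flip e)%:R * rpe g * Pmx_upper g f =
          \sum_g (flip e == g)%:R * ((~~ incr e)%:R * rpe g * Pmx_upper g f).
  by apply: eq_bigr => g _; rewrite eq_sym; ring.
rewrite sumr_delta !mxE incr_flip flipK.
have ef : (e == flip e) = false by rewrite eq_sym flip_neq.
have [->|/eqP fe] := f =P e.
  by rewrite eqxx ef flip_neq /=; case: (incr e) => /=; ring.
have [->|/eqP ff] := f =P flip e.
  by rewrite eqxx ef /=; case: (incr e) => /=; ring.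
rewrite [e == f]eq_sym (negbTE fe) [flip e == f]eq_sym (negbTE ff) /=.
by case: (incr e) => /=; ring.
Qed.

Lemma det_Pmx : \det Pmx = \prod_(e | ~~ incr e) flip_det e.
Proof.
have ef e : (e == flip e) = false by rewrite eq_sym flip_neq.
have offdiag (M : 'M[R]_m) (q : pred 'I_m) :
    (forall e, M e (flip e) != 0 -> q e && ~~ q (flip e)) ->
    (forall e f, e != f -> f != flip e -> M e f = 0) -> \det M = \prod_e M e e.
  move=> Mflip Mzero; apply: (@det_block_trig _ _ M q) => e f ef'.
  have [->|ff _] := eqVneq f (flip e); last exact: Mzero.
  by apply: contraTeq => /Mflip/andP[-> /negbTE ->].
rewrite -Pmx_LU det_mulmx (offdiag _ (fun e => ~~ incr e)); first last.
- by move=> e f /negbTE ef' /negbTE ff; rewrite mxE ef' ff add0r !mulr0 mul0r.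
- move=> e; rewrite mxE ef eqxx incr_flip.
  by case: (incr e); rewrite /= ?mul0r ?add0r ?eqxx.
rewrite (offdiag _ incr); first last.
- by move=> e f /negbTE ef' /negbTE ff; rewrite mxE ef' ff mul0r add0r !mulr0 mul0r.
- move=> e; rewrite mxE ef eqxx incr_flip.
  by case: (incr e); rewrite /= ?mul0r ?add0r ?eqxx.
rewrite big1 ?mul1r => [|e _]; last by rewrite mxE eqxx ef mulr0 mul0r addr0.
rewrite (bigID incr) /= big1 ?mul1r => [|e ie]; last first.
  by rewrite mxE eqxx ef ie mulr0 mul0r addr0 !mul1r mul0r subr0.
apply: eq_bigr => e /negbTE ie.
by rewrite mxE eqxx ef ie mulr0 mul0r addr0 !mul1r /flip_det mulrC.
Qed.

Lemma Pinv_head_mx g j : (Pinv *m head_mx) g j =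
  (((edge g).2 == j)%:R - rpe (flip g) * ((edge g).1 == j)%:R) / flip_det g.
Proof.
rewrite mxE.
have -> : \sum_f Pinv g f * head_mx f j =
    \sum_f (g == f)%:R * (((edge f).2 == j)%:R / flip_det g)
    - \sum_f (flip g == f)%:R * (rpe f * ((edge f).2 == j)%:R / flip_det g).
  by rewrite -sumrB; apply: eq_bigr => f _; rewrite !mxE [f == flip g]eq_sym; ring.
by rewrite !sumr_delta edge_flip /=; ring.
Qed.

Lemma schur_edge_term i k j : nbr r i k ->
  rp i k * ((k == j)%:R - rp k i * (i == j)%:R) / (1 - rp i k * rp k i)
  = (r i k * (k == j)%:R - (i == j)%:R * a k i) / (1 - s i).
Proof.
move=> ik; have ki : nbr r k i by rewrite -nbr_sym.
rewrite one_sub_rprime2 //.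
have nik := cavity_neq0 ik; have nki := cavity_neq0 ki; have ni := node_neq0 i.
have aki := alpha_fixed ki; rewrite [r k i]r_sym in aki; rewrite /rprime [r k i]r_sym.
move: nik nki ni aki; set D1 := d i k; set D2 := d k i; set S := s i => nik nki ni aki.
have -> : a k i = r i k ^+ 2 / D2 by rewrite -aki; field.
by field; rewrite ni nki nik.
Qed.

Lemma schur_complement_entry i j : (tail_mx *m Pinv *m head_mx) i j =
  r i j / (1 - s i) - (i == j)%:R * (s i / (1 - s i)).
Proof.
rewrite -mulmxA mxE.
pose H (p : 'I_n * 'I_n) := (p.1 == i)%:R * (rp p.1 p.2 *
  ((p.2 == j)%:R - rp p.2 p.1 * (p.1 == j)%:R) / (1 - rp p.1 p.2 * rp p.2 p.1)).
have -> : \sum_g tail_mx i g * (Pinv *m head_mx) g j = \sum_(g < m) H (edge g).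
  by apply: eq_bigr => g _; rewrite Pinv_head_mx !mxE /H /flip_det rpe_flip /rpe; ring.
rewrite -(big_enum_val (A := mem (dedges r)) H).
rewrite (eq_bigl (fun p => true && nbr r p.1 p.2)); last by move=> p; rewrite inE.
rewrite -(pair_big_dep predT (fun x y => nbr r x y) (fun x y => H (x, y))) /=.
rewrite (bigD1 i) //= [X in _ + X]big1 ?addr0; last first.
  by move=> x xi; apply: big1 => y _; rewrite /H /= (negbTE xi) mul0r.
rewrite /H /=.
under eq_bigr => k ik do rewrite eqxx mul1r schur_edge_term //.
rewrite -mulr_suml sumrB -mulr_sumr.
have -> : \sum_(k | nbr r i k) r i k * (k == j)%:R = r i j.
  rewrite big_mkcond (eq_bigr (fun k => (j == k)%:R * r i k)) ?sumr_delta // => k _.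
  case: ifP => [_|/negbFE/eqP ->]; first by rewrite eq_sym mulrC.
  by rewrite mulr0.
by rewrite mulrBl mulrA.
Qed.

Lemma schur_complementE :
  1%:M - tail_mx *m Pinv *m head_mx = diag_mx (\row_i (1 - s i)^-1) *m (1%:M - r).
Proof.
apply/matrixP => i j.
rewrite mul_diag_mx [LHS]mxE [X in _ + X]mxE schur_complement_entry !mxE.
by have := node_neq0 i; set S := s i => ni; field; rewrite ni.
Qed.

Lemma det_one_sub_Rprime : \det (1%:M - Rprime r) =
  \prod_(e | ~~ incr e) flip_det e * (\prod_i (1 - s i)^-1 * \det (1%:M - r)).
Proof.
rewrite one_sub_Rprime (det_schur_complement _ _ Pmx_Pinv) det_Pmx.
rewrite schur_complementE det_mulmx det_diag.
by congr (_ * (_ * _)); apply: eq_bigr => i _; rewrite mxE.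
Qed.

Lemma Zbp_edge_ratio i j : nbr r i j ->
  Zbp_edge r i j / (Zbp_node r i * Zbp_node r j) = 1 - rp i j * rp j i.
Proof.
move=> ij; have ji : nbr r j i by rewrite -nbr_sym.
have cross : d i j * d j i - r i j * r i j = d i j * (1 - s j).
  by rewrite (cavityE ji) -expr2 -(alpha_fixed ij); ring.
rewrite one_sub_rprime2 // /Zbp_edge det_mx22 !mxE /= mulrNN cross /Zbp_node.
have nij := cavity_neq0 ij; have ni := node_neq0 i; have nj := node_neq0 j.
move: nij ni nj; set D := d i j; set Si := s i; set Sj := s j => nij ni nj.
by field; rewrite nij ni nj.
Qed.

Lemma Zbp_factorization : (\det (1%:M - r))^-1 = Zbp r * (\det (1%:M - Rprime r))^-1.
Proof.
have edges : \prod_(e | ~~ incr e) flip_det e =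
    \prod_(p : 'I_n * 'I_n | (p.1 < p.2)%N && nbr r p.1 p.2)
      (Zbp_edge r p.1 p.2 / (Zbp_node r p.1 * Zbp_node r p.2)).
  rewrite (eq_bigr (fun e => 1 - rp (edge e).2 (edge e).1 * rp (edge e).1 (edge e).2));
    last by move=> e _; rewrite /flip_det rpe_flip mulrC.
  rewrite (prod_decr_edges r_sym r_diag0 (fun x y => 1 - rp y x * rp x y)).
  by apply: eq_bigr => p /andP[_ p12]; rewrite Zbp_edge_ratio.
rewrite det_one_sub_Rprime edges /Zbp.
set N := \prod_i Zbp_node r i; set E := \prod_(p | _) _; set D := \det _.
have En : E != 0.
  rewrite /E -edges; apply/prodf_neq0 => e _; exact: flip_det_neq0.
have Nn : N != 0 by apply/prodf_neq0 => i _; rewrite invr_eq0 node_neq0.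
have [->|Dn] := eqVneq D 0; first by rewrite !mulr0 invr0 mulr0.
by field; rewrite Dn Nn En.
Qed.

End FixedPointAlgebra.

Lemma cvg_big_sum (R : realType) (I : eqType) (s : seq I) (P : pred I)
    (f : I -> nat -> R) (l : I -> R) :
  (forall i, f i @ \oo --> l i) ->
  (fun t => \sum_(i <- s | P i) f i t) @ \oo --> \sum_(i <- s | P i) l i.
Proof.
move=> fl; elim: s => [|x s IHs].
  by rewrite big_nil; under eq_fun do rewrite big_nil; exact: cvg_cst.
rewrite big_cons; under eq_fun do rewrite big_cons.
by case: (P x); [exact: cvgD | exact: IHs].
Qed.

Section MessageConvergence.
Variables (R : realType) (n : nat) (r : 'M[R]_n).
Hypothesis r_sym : forall i j, r i j = r j i.
Variable v : 'I_n -> R.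
Hypothesis v_gt0 : forall i, 0 < v i.
Hypothesis v_fixed : forall i, v i = 1 + \sum_j `|r i j| * v j.

Local Notation msg t := (bp_msg r t).

Let cap k l := `|r k l| * v k / v l.

Lemma cap_ge0 k l : 0 <= cap k l.
Proof. by rewrite /cap divr_ge0 // ?mulr_ge0 // ltW. Qed.

Lemma sum_cap i : \sum_k cap k i = (v i - 1) / v i.
Proof.
rewrite /cap -mulr_suml; congr (_ / _).
have -> : v i - 1 = \sum_j `|r i j| * v j by rewrite v_fixed; ring.
by apply: eq_bigr => k _; rewrite r_sym.
Qed.

Lemma sum_excl_le (x : 'I_n -> 'I_n -> R) i j :
  (forall k l, 0 <= x k l <= cap k l) ->
  \sum_(k | nbr r i k && (k != j)) x k i <= (v i - 1 - `|r i j| * v j) / v i.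
Proof.
move=> x_cap.
apply: (@le_trans _ _ (\sum_(k | k != j) cap k i)).
  rewrite [X in _ <= X]big_mkcond [X in X <= _]big_mkcond /=.
  apply: ler_sum => k _; case: (nbr r i k) => /=; case: (k != j) => //=.
  - by case/andP: (x_cap k i).
  - exact: cap_ge0.
have := sum_cap i; rewrite (bigD1 j) //= => capE.
have -> : \sum_(k | k != j) cap k i = (v i - 1) / v i - cap j i by rewrite -capE; ring.
by rewrite /cap r_sym -mulrBl.
Qed.

Lemma bp_update_capped (x : 'I_n -> 'I_n -> R) i j :
  (forall k l, 0 <= x k l <= cap k l) ->
  let S := \sum_(k | nbr r i k && (k != j)) x k i in
  0 < 1 - S /\ 0 <= r i j ^+ 2 / (1 - S) <= cap i j.
Proof.
move=> x_cap S; have hS := sum_excl_le i j x_cap; rewrite -/S in hS.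
have vi := v_gt0 i; have vj := v_gt0 j.
set A := `|r i j|; have A0 : 0 <= A := normr_ge0 _.
have low : (1 + A * v j) / v i <= 1 - S.
  have -> : (1 + A * v j) / v i = 1 - (v i - 1 - A * v j) / v i.
    by field; rewrite gt_eqF.
  exact: lerB (lexx 1) hS.
have low0 : 0 < (1 + A * v j) / v i by rewrite divr_gt0 // ltr_pwDl // mulr_ge0 // ltW.
have S1 : 0 < 1 - S by apply: lt_le_trans low.
split => //; apply/andP; split; first by rewrite divr_ge0 ?sqr_ge0 // ltW.
apply: (@le_trans _ _ (r i j ^+ 2 / ((1 + A * v j) / v i))).
  by rewrite ler_wpM2l ?sqr_ge0 // lef_pV2 // posrE.
rewrite /cap -/A -real_normK ?num_real // -/A invf_div mulrA ler_pdivrMr; last first.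
  by rewrite ltr_pwDl // mulr_ge0 // ltW.
have -> : A * v i / v j * (1 + A * v j) = A ^+ 2 * v i + A * v i / v j.
  by field; rewrite gt_eqF.
by rewrite lerDl divr_ge0 ?mulr_ge0 // ltW.
Qed.

Lemma bp_msg_capped t i j : 0 <= msg t i j <= cap i j.
Proof.
elim: t i j => [|t IHt] i j /=; first by rewrite lexx cap_ge0.
by case: (bp_update_capped i j IHt).
Qed.

Lemma bp_msg_nondecreasing t i j : msg t i j <= msg t.+1 i j.
Proof.
elim: t i j => [|t IHt] i j; first by case/andP: (bp_msg_capped 1 i j).
rewrite [msg t.+2 i j]/= [msg t.+1 i j]/=.
have [pos1 _] := bp_update_capped i j (bp_msg_capped t.+1).
have [pos0 _] := bp_update_capped i j (bp_msg_capped t).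
rewrite ler_wpM2l ?sqr_ge0 // lef_pV2 ?posrE //.
by rewrite lerB // ler_sum // => k _; exact: IHt.
Qed.

Lemma bp_msg_cvg i j : bp_alpha r i j = sup (range (fun t => msg t i j)) /\
  (fun t => msg t i j) @ \oo --> bp_alpha r i j.
Proof.
have mono : nondecreasing_seq (fun t => msg t i j).
  by apply/nondecreasing_seqP => t; exact: bp_msg_nondecreasing.
have ub : has_ubound (range (fun t => msg t i j)).
  by exists (cap i j) => _ [t _ <-]; case/andP: (bp_msg_capped t i j).
have msg_sup := nondecreasing_cvgn mono ub.
have alphaE : bp_alpha r i j = sup (range (fun t => msg t i j)) by exact: cvg_lim.
by split => //; rewrite alphaE.
Qed.

Lemma bp_alpha_capped i j : 0 <= bp_alpha r i j <= cap i j.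
Proof.
have [-> _] := bp_msg_cvg i j; apply/andP; split.
  apply: (@le_trans _ _ (msg 0 i j)) => //; apply: ub_le_sup; last by exists 0%N.
  by exists (cap i j) => _ [t _ <-]; case/andP: (bp_msg_capped t i j).
apply: ge_sup; first by exists (msg 0 i j), 0%N.
by move=> _ [t _ <-]; case/andP: (bp_msg_capped t i j).
Qed.

Lemma bp_alpha_fixed i j :
  0 < 1 - bp_alpha_excl r i j /\
  bp_alpha r i j = r i j ^+ 2 / (1 - bp_alpha_excl r i j).
Proof.
have [S1 _] := bp_update_capped i j bp_alpha_capped; split => //.
have [_ msg_alpha] := bp_msg_cvg i j.
have shifted : (fun t => msg t.+1 i j) @ \oo --> bp_alpha r i j.
  by rewrite (cvg_shiftS (fun t => msg t i j)).
have update : (fun t => msg t.+1 i j) @ \oo --> r i j ^+ 2 / (1 - bp_alpha_excl r i j).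
  apply: cvgM; first exact: cvg_cst.
  apply: cvgV; first by rewrite gt_eqF.
  apply: cvgB; first exact: cvg_cst.
  by apply: cvg_big_sum => k; exact: (proj2 (bp_msg_cvg k i)).
by rewrite -(cvg_lim _ shifted) ?(cvg_lim _ update) //; exact: norm_hausdorff.
Qed.

Lemma bp_node_lt1 i : \sum_(k | nbr r i k) bp_alpha r k i < 1.
Proof.
apply: (@le_lt_trans _ _ ((v i - 1) / v i)).
  rewrite -sum_cap [X in _ <= X](bigID (nbr r i)) /= -[X in X <= _]addr0.
  apply: lerD; last by apply: sumr_ge0 => k _; exact: cap_ge0.
  by apply: ler_sum => k _; case/andP: (bp_alpha_capped k i).
by rewrite ltr_pdivrMr // mul1r ltrBlDr ltrDl.
Qed.

End MessageConvergence.

Section SpectralRadius.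
Variables (R : realType) (n : nat) (B : 'M[R]_n).

Lemma spectral_radius_ubound :
  has_ubound [set x : R | exists z : R[i], eigenvalueC B z /\ x = modC z].
Proof.
set p := char_poly (map_mx (fun x : R => (x%:C)%C) B).
have [rs pE] := closed_field_poly_normal p.
have lc : lead_coef p = 1 by apply/monicP; exact: char_poly_monic.
exists (\sum_(w <- rs) modC w) => _ [z [pz ->]].
have zrs : z \in rs by move: pz; rewrite /eigenvalueC -/p pE lc scale1r root_prod_XsubC.
rewrite (big_rem z) //= lerDl.
by apply: sumr_ge0 => w _; exact: sqrtr_ge0.
Qed.

Lemma real_eigenvalue_le_spectral_radius (l : R) :
  root (char_poly B) l -> `|l| <= spectral_radius B.
Proof.
move=> Bl; apply: ub_le_sup; first exact: spectral_radius_ubound.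
exists (l%:C)%C; split.
  by rewrite /eigenvalueC -(map_char_poly (real_complex R)); exact: rmorph_root.
by rewrite /modC /= expr0n /= addr0 sqrtr_sqr.
Qed.

Lemma det_one_sub_scale_neq0 : spectral_radius B < 1 ->
  forall t, 0 <= t <= 1 -> \det (1%:M - t *: B) != 0.
Proof.
move=> rhoB t /andP[t0 t1]; apply/eqP => det0.
have [t_eq0|t_neq0] := eqVneq t 0.
  by move: det0; rewrite t_eq0 scale0r subr0 det1; apply/eqP; exact: oner_neq0.
have tpos : 0 < t by rewrite lt_neqAle eq_sym t_neq0.
have : root (char_poly B) t^-1.
  rewrite -eigenvalue_root_char; apply/eigenvalueP.
  have /det0P[x x_neq0 xE] : \det (t^-1%:M - B) == 0.
    rewrite (_ : _ - B = t^-1 *: (1%:M - t *: B)) ?detZ ?det0 ?mulr0 //.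
    by rewrite scalerBr scalemx1 scalerA mulVf // scale1r.
  exists x => //; move/eqP: xE; rewrite mulmxBr mul_mx_scalar subr_eq0.
  by move/eqP.
move/real_eigenvalue_le_spectral_radius; rewrite ger0_norm ?invr_ge0 //.
have : 1 <= t^-1 by rewrite invf_ge1.
lra.
Qed.

End SpectralRadius.

Section PositiveSolution.
Variables (R : rcfType) (n : nat) (B : 'M[R]_n).
Hypothesis B_ge0 : forall i j, 0 <= B i j.
Hypothesis det_neq0 : forall t, 0 <= t <= 1 -> \det (1%:M - t *: B) != 0.

Definition pencil : 'M[{poly R}]_n := 1%:M - 'X *: map_mx polyC B.

(* [det(I - X B)] times the [i]-th entry of [(I - X B)^-1 1]. *)
Definition adj_row_sum i := \sum_j (\adj pencil) i j.

Local Notation D := (\det pencil).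
Local Notation N := adj_row_sum.

Lemma horner_det_pencil t : D.[t] = \det (1%:M - t *: B).
Proof.
have -> : 1%:M - t *: B = map_mx (horner_eval t) pencil.
  apply/matrixP => i j; rewrite !mxE /= horner_evalE.
  by rewrite hornerD hornerN hornerM hornerX hornerC hornerMn hornerC.
by rewrite det_map_mx /= horner_evalE.
Qed.

Lemma horner_adj_row_sum i t : (N i).[t] = D.[t] + t * \sum_k B i k * (N k).[t].
Proof.
have NE : N i = D + 'X * \sum_k (B i k)%:P * N k.
  have := congr1 (fun M : 'M[{poly R}]_n => \sum_j M i j) (mul_mx_adj pencil) => /=.
  under eq_bigr do rewrite mxE.
  rewrite exchange_big /=; under eq_bigr do rewrite -mulr_sumr.
  have -> : \sum_j (D%:M : 'M[{poly R}]_n) i j = D.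
    by rewrite (eq_bigr (fun j => (i == j)%:R * D)) ?sumr_delta // => j _;
      rewrite mxE mulr_natl.
  move=> <-.
  have -> : \sum_k pencil i k * N k =
      \sum_k (i == k)%:R * N k - 'X * \sum_k (B i k)%:P * N k.
    under eq_bigr => k _ do rewrite !mxE mulrBl -mulrA.
    by rewrite sumrB mulr_sumr.
  by rewrite sumr_delta; ring.
rewrite {1}NE hornerD hornerM hornerX; congr (_ + _ * _).
by rewrite horner_sum; under eq_bigr => k _ do rewrite hornerM hornerC.
Qed.

Lemma horner_det_pencil0 : D.[0] = 1.
Proof. by rewrite horner_det_pencil scale0r subr0 det1. Qed.

Lemma horner_adj_row_sum0 i : (N i).[0] = 1.
Proof. by rewrite horner_adj_row_sum mul0r addr0 horner_det_pencil0. Qed.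

Lemma horner_det_pencil_gt0 t : 0 <= t <= 1 -> 0 < D.[t].
Proof.
case/andP=> t0 t1; apply: poly_gt0_noroot t0 _ _; first by rewrite horner_det_pencil0.
move=> x; rewrite in_itv /= => /andP[x0 xt].
by rewrite /root horner_det_pencil det_neq0 // x0 (le_trans xt).
Qed.

(* If some [N i] vanished in [[0, 1]], at the first common zero [m] of the
   [N k] they would all still be nonnegative, and then
   [N i m = D m + m (B N)_i m > 0]. *)
Lemma adj_row_sum_noroot i t : 0 <= t <= 1 -> ~~ root (N i) t.
Proof.
move=> /andP[t0 t1]; apply/negP => Nit.
pose P := \prod_k N k.
have root_prod x : root P x = [exists k, root (N k) x].
  rewrite /root /P horner_prod prodf_seq_eq0.
  apply/hasP/existsP => [[k _ /= Nk]|[k Nk]]; first by exists k.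
  by exists k; rewrite ?mem_index_enum.
have P0 : P.[0] = 1.
  by rewrite /P horner_prod (eq_bigr (fun=> 1)) ?prodr_const ?expr1n // => k _;
    rewrite horner_adj_row_sum0.
have t_gt0 : 0 < t.
  rewrite lt_neqAle t0 andbT; apply: contraTneq Nit => <-.
  by rewrite /root horner_adj_row_sum0 oner_neq0.
have Pt : root P t by rewrite root_prod; apply/existsP; exists i.
have P_neq0 : P != 0 by apply: contra_eq_neq P0 => ->; rewrite horner0 eq_sym oner_eq0.
have [m /andP[m0 mt] [Pm noroot_P]] := first_root P_neq0 t_gt0 Pt.
have Nm k : 0 <= (N k).[m].
  apply: poly_ge0_noroot (ltW m0) _ _; first by rewrite horner_adj_row_sum0 ltr01.
  move=> x; rewrite in_itv /= le_eqVlt => /andP[/orP[/eqP <-|x0] xm].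
    by rewrite /root horner_adj_row_sum0 oner_neq0.
  apply: contraNN (noroot_P x _); last by rewrite in_itv /= x0.
  by move=> Nkx; rewrite root_prod; apply/existsP; exists k.
move: Pm; rewrite root_prod => /existsP[k /rootP]; rewrite horner_adj_row_sum.
have : 0 < D.[m] by apply: horner_det_pencil_gt0; rewrite ltW // (le_trans mt).
have : 0 <= m * \sum_l B k l * (N l).[m].
  by apply: mulr_ge0; [exact: ltW | apply: sumr_ge0 => l _; exact: mulr_ge0].
lra.
Qed.

Lemma exists_pos_solution :
  exists v : 'I_n -> R, (forall i, 0 < v i) /\ forall i, v i = 1 + \sum_j B i j * v j.
Proof.
have D1 : 0 < D.[1] by apply: horner_det_pencil_gt0; rewrite ler01 lexx.
have N1 i : 0 < (N i).[1].
  apply: poly_gt0_noroot ler01 _ _; first by rewrite horner_adj_row_sum0 ltr01.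
  by move=> x; rewrite in_itv /= => /adj_row_sum_noroot.
exists (fun i => (N i).[1] / D.[1]); split => [i|i]; first by rewrite divr_gt0.
rewrite horner_adj_row_sum mul1r mulrDl divff ?gt_eqF // mulr_suml.
by congr (_ + _); apply: eq_bigr => j _; rewrite mulrA.
Qed.

End PositiveSolution.

Theorem theorem5 (R : realType) (n : nat) (r : 'M[R]_n) :
  r^T = r ->
  (forall i, r i i = 0) ->
  spectral_radius (absmx r) < 1 ->
  (\det (1%:M - r))^-1 = Zbp r * (\det (1%:M - Rprime r))^-1.
Proof.
move=> rT r_diag0 rho_lt1.
have r_sym i j : r i j = r j i by rewrite -{1}rT mxE.
have absr_ge0 i j : 0 <= absmx r i j by rewrite mxE.
have [v [v_gt0 v_fixed]] :=
  exists_pos_solution absr_ge0 (det_one_sub_scale_neq0 rho_lt1).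
have v_fixed' i : v i = 1 + \sum_j `|r i j| * v j.
  by rewrite v_fixed; under eq_bigr do rewrite mxE.
apply: Zbp_factorization => // [i j _|i j _|i].
- by have [/gt_eqF/negbT d_neq0 ->] := bp_alpha_fixed r_sym v_gt0 v_fixed' i j;
    rewrite divfK.
- by have [/gt_eqF/negbT] := bp_alpha_fixed r_sym v_gt0 v_fixed' i j.
- by rewrite subr_eq0 eq_sym (lt_eqF (bp_node_lt1 r_sym v_gt0 v_fixed' i)).
Qed.
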